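(* Let $\mathcal{G}$ be a subgraph of $G$ satisfying $P_{\mathcal{G}}$, and let $q\in\Delta$ with $G_q=\mathcal{G}$. Then $q\in\Gamma$ if and only if $q\in\Gamma_{\mathcal{G}}$, and in that case $q$ is a stable equilibrium. In other words, $\Gamma_s\cap\{q\in\Delta:G_q=\mathcal{G}\}=\Gamma\cap\{q\in\Delta:G_q=\mathcal{G}\}=\Gamma_{\mathcal{G}}$.
   Context: Let $G=(\mathbb{V},E)$ be a finite graph with adjacency $\sim$ and edge set $E$. Let $a_{ij}=a_{ji}\ge0$ ($>0$ only if $i\sim j$) and $p_{ij}=p_{ji}\in[0,1]$ ($=0$ if $i\not\sim j$), with some $a_{ij}p_{ij}>0$. Fix $h_1\in(0,1]$; $\Delta$ is the set of arrays $x=(x_{ij})$ with $x_{ij}=x_{ji}\ge0$, $x_{ij}=0$ if $i\not\sim j$, $\sum_{i,j}x_{ij}=1$, $\sum_{(i,j):a_{ij}p_{ij}>0}x_{ij}\ge h_1$; $x_i=\sum_jx_{ij}$. $\partial\Delta$: the $x\in\Delta$ for which some vertex $i$ having a neighbour $j$ with $a_{ij}p_{ij}>0$ has $\sum_{j:a_{ij}p_{ij}>0}x_{ij}=0$. $H(x)=\sum_{(i,j):x_{ij}>0}a_{ij}p_{ij}x_{ij}^2/(x_ix_j)$; $y_{ij}=a_{ij}p_{ij}x_{ij}/(x_ix_j)$ ($0$ if $a_{ij}p_{ij}=0$); $F(x)_{ij}=x_{ij}(y_{ij}-H(x))$ ($0$ if $x_{ij}=0$); $\Gamma=\{x\in\Delta:F(x)=0\}$.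 For $x\in\Gamma\cap(\Delta\setminus\partial\Delta)$, $J(x)$ is the Jacobian (indexed by pairs of edges) of $(x_e)_{e\in E}\mapsto(F_e(x))_{e\in E}$, with $x_{ij}=x_{ji}=x_e$ for $e=\{i,j\}$, $x_i=\sum_jx_{ij}$, the formulas for $H$ (terms with $a_{ij}p_{ij}>0$) and $F$ regarded as smooth functions of unconstrained variables near $x$. $x$ is a stable equilibrium iff $x\in\Gamma\cap(\Delta\setminus\partial\Delta)$ and all eigenvalues of $J(x)$ have nonpositive real part; $\Gamma_s$ is the set of stable equilibria. $G_x$: subgraph with vertex set $\mathbb{V}$, $i,j$ adjacent iff $x_{ij}>0$. For a subgraph $\mathcal{G}$ of $G$ (vertex set $\mathbb{V}$), $P_{\mathcal{G}}$ means: (1) all edges $\{i,j\}$ of $\mathcal{G}$ in a same component have the same value $a_{ij}p_{ij}>0$; (2) each component has at most one vertex with several neighbours; (3) a vertex $i$ lies on an edge of $\mathcal{G}$ iff $a_{ij}p_{ij}>0$ for some $j\sim i$. Under $P_{\mathcal{G}}$: the nucleus of a component is its unique vertex with several neighbours (chosen arbitrarily if the component has exactly two vertices; the vertex itself if isolated); $N$ is the set of nuclei; for $i\in N$, $(ap)_i=a_{ik}p_{ik}$ for any $\mathcal{G}$-neighbour $k$ of $i$ ($:=0$ if $i$ is isolated). $\Gamma_{\mathcal{G}}$ is the set of $q\in\Delta$ with $G_q=\mathcal{G}$, $q_i=(ap)_i/(2\sum_{j\in N}(ap)_j)$ for all $i\in N$, and for each $i\in N$ the numbers $q_{ij}$ ($j$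 a $\mathcal{G}$-neighbour of $i$) positive with sum $q_i$. *)

From HB Require Import structures.
From mathcomp Require Import all_boot all_order all_algebra.
From mathcomp Require Import all_classical all_reals all_analysis.
From mathcomp Require Import complex.

Set Implicit Arguments.
Unset Strict Implicit.
Unset Printing Implicit Defensive.

Import Order.TTheory GRing.Theory Num.Theory.
Local Open Scope ring_scope.

Section Model.
Variables (R : realType) (V : finType) (adj : rel V) (a p : V -> V -> R)
  (h1 : R).

Definition ap (i j : V) : R := a i j * p i j.

Definition standing_hyps : Prop :=
  [/\ (forall i j, adj i j = adj j i) /\ (forall i, ~~ adj i i),
      (forall i j, a i j = a j i /\ 0 <= a i j /\ (0 < a i j -> adj i j)),
      (forall i j, p i j = p j i /\ 0 <= p i j /\ p i j <= 1
                   /\ (~~ adj i j -> p i j = 0)),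
      (exists i j, 0 < a i j * p i j) & (0 < h1 /\ h1 <= 1)].

Definition vsum (x : V -> V -> R) (i : V) : R := \sum_(j : V) x i j.

Definition inDelta (x : V -> V -> R) : Prop :=
  [/\ (forall i j, x i j = x j i), (forall i j, 0 <= x i j),
      (forall i j, ~~ adj i j -> x i j = 0),
      \sum_(i : V) \sum_(j : V) x i j = 1 &
      h1 <= \sum_(i : V) \sum_(j : V | 0 < ap i j) x i j].

Definition inBoundary (x : V -> V -> R) : Prop :=
  inDelta x /\
  exists i, (exists j, adj i j /\ 0 < ap i j) /\
            \sum_(j : V | 0 < ap i j) x i j = 0.

Definition Hf (x : V -> V -> R) : R :=
  \sum_(i : V) \sum_(j : V | 0 < x i j)
     ap i j * x i j ^+ 2 / (vsum x i * vsum x j).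

Definition yf (x : V -> V -> R) (i j : V) : R :=
  if 0 < ap i j then ap i j * x i j / (vsum x i * vsum x j) else 0.

Definition Ff (x : V -> V -> R) (i j : V) : R :=
  if x i j == 0 then 0 else x i j * (yf x i j - Hf x).

Definition inGamma (x : V -> V -> R) : Prop :=
  inDelta x /\ forall i j, Ff x i j = 0.

(* Edges of G: each edge {i,j} is represented once, as the ordered pair
   whose first component has smaller rank in the enumeration of V. *)
Definition is_edge (e : V * V) : bool :=
  adj e.1 e.2 && (enum_rank e.1 < enum_rank e.2)%N.
Definition edge := {e : V * V | is_edge e}.

(* the symmetric array with x_ij = x_ji = v_e for e = {i,j} (0 off edges) *)
Definition arrOf (v : edge -> R) (i j : V) : R :=
  \sum_(e : edge | (((val e).1 == i) && ((val e).2 == j))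
                   || (((val e).1 == j) && ((val e).2 == i))) v e.

(* H and F as smooth functions of the unconstrained edge variables *)
Definition Hsmooth (v : edge -> R) : R :=
  \sum_(i : V) \sum_(j : V | 0 < ap i j)
     ap i j * arrOf v i j ^+ 2 / (vsum (arrOf v) i * vsum (arrOf v) j).

Definition Fsmooth (v : edge -> R) (e : edge) : R :=
  arrOf v (val e).1 (val e).2 *
  (yf (arrOf v) (val e).1 (val e).2 - Hsmooth v).

Definition edgevec (x : V -> V -> R) : edge -> R :=
  fun e => x (val e).1 (val e).2.

Definition upd (v : edge -> R) (f : edge) (t : R) : edge -> R :=
  fun g => if g == f then t else v g.

Definition jac (x : V -> V -> R) (e f : edge) : R :=
  derive1 (fun t : R => Fsmooth (upd (edgevec x) f t) e) (edgevec x f).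

Definition jacmx (x : V -> V -> R) : 'M[R]_#|{: edge}| :=
  \matrix_(k, l) jac x (enum_val k) (enum_val l).

Definition eigen_nonpos_re (M : 'M[R]_#|{: edge}|) : Prop :=
  forall z : R[i], root (char_poly (map_mx (fun r : R => r%:C%C) M)) z ->
    complex.Re z <= 0.

Definition stable_eq (x : V -> V -> R) : Prop :=
  [/\ inGamma x, ~ inBoundary x & eigen_nonpos_re (jacmx x)].

Definition is_subgraph (g : rel V) : Prop :=
  (forall i j, g i j = g j i) /\ (forall i j, g i j -> adj i j).

Definition nbrs (g : rel V) (i : V) : {set V} := [set j | g i j].

Definition P_sub (g : rel V) : Prop :=
  [/\ (forall i j, g i j -> 0 < ap i j),
      (forall i j k l, g i j -> g k l -> connect g i k -> ap i j = ap k l),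
      (forall i k, connect g i k -> (1 < #|nbrs g i|)%N ->
                   (1 < #|nbrs g k|)%N -> i = k) &
      (forall i, (exists j, g i j) <-> (exists j, adj i j /\ 0 < ap i j))].

(* N is a valid choice of nuclei: one per component, namely the vertex with
   several neighbours when it exists (arbitrary otherwise). *)
Definition is_nuclei (g : rel V) (N : {set V}) : Prop :=
  (forall i, exists k, [/\ k \in N, connect g i k &
                         forall k', k' \in N -> connect g i k' -> k' = k]) /\
  (forall k i, k \in N -> connect g k i -> (1 < #|nbrs g i|)%N -> i = k).

Definition apN (g : rel V) (i : V) : R :=
  if [pick k | g i k] is Some k then ap i k else 0.

Definition graph_is (x : V -> V -> R) (g : rel V) : Prop :=
  forall i j, (0 < x i j) = g i j.

Definition inGammaG (g : rel V) (N : {set V}) (q : V -> V -> R) : Prop :=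
  [/\ inDelta q, graph_is q g,
      (forall i, i \in N ->
         vsum q i = apN g i / (2 * \sum_(j in N) apN g j)) &
      (forall i, i \in N -> (forall j, g i j -> 0 < q i j) /\
                            \sum_(j : V | g i j) q i j = vsum q i)].

End Model.

From Pilot Require Import Defs.
From HB Require Import structures.
From mathcomp Require Import all_boot all_order all_algebra.
From mathcomp Require Import all_classical all_reals all_analysis.
From mathcomp Require Import complex.
From mathcomp Require Import ring lra.
Import Order.TTheory GRing.Theory Num.Theory.
Import numFieldNormedType.Exports.
Local Open Scope ring_scope.
Local Open Scope classical_set_scope.

(* Property P_G makes every component of G_q a star around its nucleus k, and
   a leaf l of that star satisfies x_l = x_kl.  Hence every term of H collapses
   to a share of its nucleus, y_ij = (ap)_k / x_k on every edge of the star,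
   and H = 2 sum_{k in N} (ap)_k whatever the weights are: F(q) = 0 says exactly
   q_k = (ap)_k / H.  The collapse persists under perturbations inside the
   support, so there H is locally constant and an edge e of G_q only feels the
   total mass of its nucleus k: dF_e/dx_f = - x_e (ap)_k / x_k^2 [k in f].  An
   edge outside the support has the row -H.e_e.  For an eigenvector v with
   Re z > 0 the coordinates off the support vanish; summing the equations of
   the edges at a nucleus k gives (z + c) sum_{f ∋ k} v_f = 0 with c >= 0, so
   these sums vanish, and then so does every coordinate of v. *)

Section DifferenceQuotient.
Context {R : realType}.

Lemma derive1_factor (F K : R -> R) (t0 : R) :
  K h @[h --> (0:R)] --> K 0 ->
  (\forall h \near (0:R), h != 0 -> F (h + t0) - F t0 = h * K h) ->
  derive1 F t0 = K 0.
Proof.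
move=> cK HF; rewrite /derive1; apply: cvg_lim => //.
have : K @ (0:R)^' --> K 0 by apply/continuous_withinNx.
apply: cvg_trans; apply: near_eq_cvg.
have HF' : \forall h \near (0:R)^', h != 0 -> F (h + t0) - F t0 = h * K h.
  exact: cvg_within HF.
near=> h.
have hn : h != 0 by near: h; exact: nbhs_dnbhs_neq.
have step : h != 0 -> F (h + t0) - F t0 = h * K h by near: h; exact: HF'.
by rewrite (step hn) -[_ *: _]/(_ * _) mulrA mulVf // mul1r.
Unshelve. all: by end_near.
Qed.

Lemma cvg_inv_affine (s tau : R) : s != 0 ->
  (s + tau * h)^-1 @[h --> (0:R)] --> s^-1.
Proof.
move=> s0; have L : s + tau * h @[h --> (0:R)] --> s + tau * 0.
  by apply: cvgD; [exact: cvg_cst | apply: cvgM; [exact: cvg_cst | exact: cvg_id]].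
by rewrite mulr0 addr0 in L; exact: cvgV.
Qed.

End DifferenceQuotient.

Section ArrayLimits.
Context {R : realType} {V : finType} {X : R -> V -> V -> R} {t0 : R}.
Hypothesis X_cvg : forall i j, X t i j @[t --> t0] --> X t0 i j.

Lemma vsum_cvg i : vsum (X t) i @[t --> t0] --> vsum (X t0) i.
Proof. by apply: cvg_big => //; exact: add_continuous. Qed.

Lemma ratio_vsum_cvg (f : R -> R) i j :
  vsum (X t0) i * vsum (X t0) j != 0 -> f t @[t --> t0] --> f t0 ->
  f t / (vsum (X t) i * vsum (X t) j) @[t --> t0] -->
  f t0 / (vsum (X t0) i * vsum (X t0) j).
Proof.
by move=> nz cf; apply: cvgM => //; apply: cvgV => //; apply: cvgM; exact: vsum_cvg.
Qed.

End ArrayLimits.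

Lemma char_poly_trmx (F : fieldType) n (A : 'M[F]_n) : char_poly A^T = char_poly A.
Proof.
rewrite /char_poly /char_poly_mx.
by rewrite -[\det ('X%:M - _ A)]det_tr raddfB /= tr_scalar_mx map_trmx.
Qed.

Lemma mul_eq_opp_nonneg_eq0 {R : realType} {z u : R[i]} {r : R} :
  0 < complex.Re z -> 0 <= r -> z * u = - (r%:C%C * u) -> u = 0.
Proof.
move=> Re_z r0 zu; have : (z + r%:C%C) * u = 0 by rewrite mulrDl zu addNr.
move/eqP; rewrite mulf_eq0 => /orP [/eqP zr|/eqP //]; exfalso.
have ReE : complex.Re (z + r%:C%C) = complex.Re z + r by case: z {zu zr Re_z}.
have : complex.Re z + r = 0 by rewrite -ReE zr.
by clear zu zr ReE; lra.
Qed.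

Section Model.
Context {R : realType} {V : finType} {adj : rel V} {a p : V -> V -> R} {h1 : R}.
Hypothesis hyps : standing_hyps adj a p h1.
Context {g : rel V} {N : {set V}}.
Hypotheses (g_sub : is_subgraph adj g) (g_P : P_sub adj a p g) (N_nuclei : is_nuclei g N).

Local Notation ap := (ap a p).
Local Notation apN := (apN a p g).
Local Notation Hstar := (2 * \sum_(k in N) apN k).

Lemma adj_irr i : adj i i = false.
Proof. by case: hyps => [[_ H] _ _ _ _]; apply/negbTE. Qed.

Lemma adj_sym i j : adj i j = adj j i.
Proof. by case: hyps => [[H _] _ _ _ _]. Qed.

Lemma ap_sym i j : ap i j = ap j i.
Proof.
by case: hyps => [_ Ha Hp _ _]; rewrite /Defs.ap (proj1 (Ha i j)) (proj1 (Hp i j)).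
Qed.

Lemma ap_ge0 i j : 0 <= ap i j.
Proof.
case: hyps => [_ Ha Hp _ _]; rewrite /Defs.ap mulr_ge0 //.
  by case: (Ha i j) => _ [].
by case: (Hp i j) => _ [].
Qed.

Lemma ap_gt0_adj {i j} : 0 < ap i j -> adj i j.
Proof.
case: hyps => [_ Ha _ _ _]; rewrite /Defs.ap => ap_gt0.
case: (Ha i j) => _ [a_ge0]; apply; rewrite lt_def a_ge0 andbT.
by apply: contraTneq ap_gt0 => ->; rewrite mul0r ltxx.
Qed.

Lemma g_sym : symmetric g.
Proof. by case: g_sub. Qed.

Lemma g_adj i j : g i j -> adj i j.
Proof. by case: g_sub => _; apply. Qed.

Lemma g_irr i : g i i = false.
Proof. by apply/negbTE/negP => /g_adj; rewrite adj_irr. Qed.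

Lemma ap_gt0_g i j : g i j -> 0 < ap i j.
Proof. by case: g_P => H _ _ _; apply: H. Qed.

Lemma g_connect_sym : connect_sym g.
Proof. exact: sym_connect_sym g_sym. Qed.

Lemma card_nbrs_le1_eq {i j k} : (#|nbrs g i| <= 1)%N -> g i j -> g i k -> k = j.
Proof.
by move=> /card_le1_eqP H gij gik; have := H k j; rewrite !inE => /(_ gik gij).
Qed.

Lemma nucleus_edge {i j} : g i j -> (i \in N) = (j \notin N).
Proof.
move=> gij; case: N_nuclei => [N_uniq N_center].
have ij : i != j by apply: contraTneq gij => ->; rewrite g_irr.
case iN: (i \in N); case jN: (j \in N) => //=.
- case: (N_uniq i) => k [_ _ U].
  by move: ij; rewrite (U i iN (connect0 _ _)) (U j jN (connect1 gij)) eqxx.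
- case: (N_uniq i) => k [kN cik _].
  have cki : connect g k i by rewrite g_connect_sym.
  have ckj : connect g k j by apply: connect_trans cki (connect1 gij).
  have ki : k != i by apply: contraTneq kN => ->; rewrite iN.
  have kj : k != j by apply: contraTneq kN => ->; rewrite jN.
  have di : (#|nbrs g i| <= 1)%N.
    by rewrite leqNgt; apply: contra ki => /(N_center k i kN cki) ->.
  have dj : (#|nbrs g j| <= 1)%N.
    by rewrite leqNgt; apply: contra kj => /(N_center k j kN ckj) ->.
  (* a component in which neither endpoint branches is the single edge {i, j} *)
  have cl : closed_mem g (mem [pred m | (m == i) || (m == j)]).
    apply: intro_closed; first exact: g_connect_sym.
    move=> x y gxy; rewrite !inE => /orP [] /eqP ex; subst x.
    + by rewrite (card_nbrs_le1_eq di gij gxy) eqxx orbT.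
    + by rewrite (card_nbrs_le1_eq (j := i) dj _ gxy) ?eqxx // g_sym.
  have := closed_connect cl cik; rewrite !inE eqxx /= => /esym /orP [] /eqP e.
  + by rewrite e eqxx in ki.
  + by rewrite e eqxx in kj.
Qed.

Lemma nucleus_leaf {k l m} : g k l -> k \in N -> g l m -> m = k.
Proof.
move=> gkl kN glm; case: N_nuclei => _ N_center.
have dl : (#|nbrs g l| <= 1)%N.
  rewrite leqNgt; apply/negP => /(N_center k l kN (connect1 gkl)) e.
  by move: gkl; rewrite e g_irr.
by apply: (card_nbrs_le1_eq dl _ glm); rewrite g_sym.
Qed.

Lemma ap_apN {k l} : g k l -> ap k l = apN k.
Proof.
move=> gkl; rewrite /Defs.apN; case: pickP => [m gkm|/(_ l)]; last by rewrite gkl.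
by case: g_P => _ H _ _; apply: H gkl gkm (connect0 _ _).
Qed.

Lemma apN_ge0 k : 0 <= apN k.
Proof. by rewrite /Defs.apN; case: pickP => // l _; exact: ap_ge0. Qed.

Lemma apN_gt0 {k l} : g k l -> 0 < apN k.
Proof. by move=> gkl; rewrite -(ap_apN gkl) ap_gt0_g. Qed.

Lemma apN_isolated k : (forall l, ~~ g k l) -> apN k = 0.
Proof.
by move=> H; rewrite /Defs.apN; case: pickP => // l; rewrite (negbTE (H l)).
Qed.

Definition nucleus i j := if i \in N then i else j.

Lemma nucleus_in {i j} : g i j -> nucleus i j \in N.
Proof. by move=> gij; rewrite /nucleus; case: ifP => // /negbT; rewrite (nucleus_edge gij) negbK. Qed.

Lemma nucleus_endpoint {i j m} : g i j -> m \in N -> (m == i) || (m == j) ->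
  nucleus i j = m.
Proof.
move=> gij mN /orP [] /eqP em; subst m; rewrite /nucleus; first by rewrite mN.
by rewrite (nucleus_edge gij) mN.
Qed.

Definition supported (x : V -> V -> R) :=
  [/\ forall i j, x i j = x j i, forall i j, 0 <= x i j & graph_is x g].

Lemma inDelta_supported {x} : inDelta adj a p h1 x -> graph_is x g -> supported x.
Proof. by case=> H1 H2 _ _ _ gq; split. Qed.

Section Supported.
Context {x : V -> V -> R} (x_supp : supported x).

Lemma supported_sym i j : x i j = x j i.
Proof. by case: x_supp. Qed.

Lemma supported_ge0 i j : 0 <= x i j.
Proof. by case: x_supp. Qed.

Lemma supported_eq0 {i j} : ~~ g i j -> x i j = 0.
Proof.
by case: x_supp => _ x0 xg gn; apply/eqP; rewrite eq_le x0 andbT leNgt xg.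
Qed.

Lemma supported_gt0 {i j} : g i j -> 0 < x i j.
Proof. by case: x_supp => _ _ ->. Qed.

Lemma vsum_ge i j : x i j <= vsum x i.
Proof.
by rewrite /vsum (bigD1 j) //= lerDl sumr_ge0 // => m _; exact: supported_ge0.
Qed.

Lemma vsum_gt0 {i j} : g i j -> 0 < vsum x i.
Proof. by move=> gij; apply: lt_le_trans (supported_gt0 gij) (vsum_ge i j). Qed.

Lemma vsum_nucleus_gt0 {i j} : g i j -> 0 < vsum x (nucleus i j).
Proof.
move=> gij; rewrite /nucleus; case: ifP => _; first exact: vsum_gt0 gij.
by apply: (vsum_gt0 (j := i)); rewrite g_sym.
Qed.

Lemma vsum_leaf {k l} : g k l -> k \in N -> vsum x l = x k l.
Proof.
move=> gkl kN; rewrite /vsum (bigD1 k) //= big1 ?addr0 1?supported_sym // => m mk.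
by apply: supported_eq0; apply: contra mk => /(nucleus_leaf gkl kN) ->.
Qed.

Lemma yf_supported {i j} : g i j ->
  yf a p x i j = apN (nucleus i j) / vsum x (nucleus i j).
Proof.
move=> gij; have gji : g j i by rewrite g_sym.
have xij : x i j != 0 by rewrite gt_eqF ?supported_gt0.
rewrite /yf ap_gt0_g // /nucleus; case: ifP => iN.
  rewrite (vsum_leaf gij iN) (ap_apN gij); field.
  by rewrite xij gt_eqF // (vsum_gt0 gij).
have jN : j \in N by rewrite -(negbK (j \in N)) -(nucleus_edge gij) iN.
rewrite (vsum_leaf gji jN) ap_sym (ap_apN gji) (supported_sym j i); field.
by rewrite xij gt_eqF // (vsum_gt0 gji).
Qed.

End Supported.

Definition Hterm (x : V -> V -> R) i j :=
  ap i j * x i j ^+ 2 / (vsum x i * vsum x j).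

Definition nucleus_share (x : V -> V -> R) i j :=
  if i \in N then ap i j * x i j / vsum x i else 0.

Definition Hap (x : V -> V -> R) := \sum_i \sum_(j | 0 < ap i j) Hterm x i j.

Section HamiltonianOnStars.
Context {x : V -> V -> R} (x_supp : supported x).

Lemma Hterm_shares i j : Hterm x i j = nucleus_share x i j + nucleus_share x j i.
Proof.
rewrite /Hterm /nucleus_share; case gij: (g i j); last first.
  have gji : ~~ g j i by rewrite g_sym gij.
  rewrite (supported_eq0 x_supp (negbT gij)) (supported_eq0 x_supp gji).
  by rewrite expr0n /= !mulr0 !mul0r; case: ifP; case: ifP; rewrite ?addr0.
have gji : g j i by rewrite g_sym.
have xij : x i j != 0 by rewrite gt_eqF ?(supported_gt0 x_supp).
case iN: (i \in N).
  rewrite -(negbK (j \in N)) -(nucleus_edge gij) iN /= addr0.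
  rewrite (vsum_leaf x_supp gij iN); field.
  by rewrite xij gt_eqF // (vsum_gt0 x_supp gij).
have jN : j \in N by rewrite -(negbK (j \in N)) -(nucleus_edge gij) iN.
rewrite jN add0r (vsum_leaf x_supp gji jN) (supported_sym x_supp j i) ap_sym; field.
by rewrite xij gt_eqF // (vsum_gt0 x_supp gji).
Qed.

Lemma sum_nucleus_share i :
  \sum_j nucleus_share x i j = if i \in N then apN i else 0.
Proof.
rewrite /nucleus_share; case: ifP => iN; last by rewrite big1.
transitivity (\sum_j apN i * x i j / vsum x i).
  apply: eq_bigr => j _; case gij: (g i j); first by rewrite (ap_apN gij).
  by rewrite (supported_eq0 x_supp (negbT gij)) !mulr0 !mul0r.
rewrite -mulr_suml -mulr_sumr; case: (pickP (g i)) => [j gij | ng].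
  by rewrite -/(vsum x i) mulfK // gt_eqF // (vsum_gt0 x_supp gij).
by rewrite apN_isolated ?mul0r // => l; rewrite ng.
Qed.

Lemma sum_Hterm : \sum_i \sum_j Hterm x i j = Hstar.
Proof.
under eq_bigr do under eq_bigr do rewrite Hterm_shares.
under eq_bigr do rewrite big_split /=.
rewrite big_split /= [X in _ + X]exchange_big /= -mulr2n mulr_natl.
by congr (_ *+ 2); under eq_bigr do rewrite sum_nucleus_share; rewrite -big_mkcond.
Qed.

Lemma Hf_supported : Hf a p x = Hstar.
Proof.
rewrite -sum_Hterm; apply: eq_bigr => i _; rewrite big_mkcond /=.
apply: eq_bigr => j _; case: ifP => // /negbT xij.
have gij : ~~ g i j by case: x_supp => _ _ <-.
by rewrite /Hterm (supported_eq0 x_supp gij) expr0n /= mulr0 mul0r.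
Qed.

Lemma Hap_supported : Hap x = Hstar.
Proof.
rewrite -sum_Hterm; apply: eq_bigr => i _; rewrite big_mkcond /=.
apply: eq_bigr => j _; case: ifP => // /negbT apij.
have gij : ~~ g i j by apply: contra apij => /ap_gt0_g.
by rewrite /Hterm (supported_eq0 x_supp gij) expr0n /= mulr0 mul0r.
Qed.

End HamiltonianOnStars.

Lemma apN_nucleus_gt0 {i j} : g i j -> 0 < apN (nucleus i j).
Proof.
move=> gij; rewrite /nucleus; case: ifP => _; first exact: apN_gt0 gij.
by apply: (apN_gt0 (l := i)); rewrite g_sym.
Qed.

Lemma inGammaG_of_inGamma {q} : inDelta adj a p h1 q -> graph_is q g ->
  inGamma adj a p h1 q -> inGammaG adj a p h1 g N q.
Proof.
move=> D qg [_ F0]; have qs := inDelta_supported D qg.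
split => // [i iN|i iN]; last first.
  split => [j|]; first by rewrite qg.
  rewrite /vsum [RHS](bigID (g i)) /= [X in _ + X]big1 ?addr0 // => j.
  exact: supported_eq0.
case: (pickP (g i)) => [j gij | ng]; last first.
  rewrite apN_isolated ?mul0r => [|l]; last by rewrite ng.
  by rewrite /vsum big1 // => j _; apply: (supported_eq0 qs); rewrite ng.
have qij := supported_gt0 qs gij.
have := F0 i j; rewrite /Ff gt_eqF // => /eqP; rewrite mulf_eq0 gt_eqF //=.
rewrite subr_eq0 (yf_supported qs gij) (Hf_supported qs) /nucleus iN => /eqP <-.
by rewrite invf_div mulrCA mulfV ?mulr1 // gt_eqF // (apN_gt0 gij).
Qed.

Lemma inGamma_of_inGammaG {q} : inGammaG adj a p h1 g N q -> inGamma adj a p h1 q.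
Proof.
case=> D qg qN _; have qs := inDelta_supported D qg; split => // i j.
rewrite /Ff; case: eqP => // /eqP qij.
have gij : g i j by rewrite -qg lt_def qij (supported_ge0 qs).
rewrite (yf_supported qs gij) (Hf_supported qs) qN ?nucleus_in //.
by rewrite invf_div mulrCA mulfV ?mulr1 ?subrr ?mulr0 // gt_eqF ?apN_nucleus_gt0.
Qed.

Lemma not_inBoundary {q} : inDelta adj a p h1 q -> graph_is q g ->
  ~ inBoundary adj a p h1 q.
Proof.
move=> D qg [_ [i [i_ap s0]]]; have qs := inDelta_supported D qg.
case: g_P => _ _ _ /(_ i) [_ /(_ i_ap) [m gim]].
move: s0; apply/eqP; rewrite gt_eqF //.
apply: (lt_le_trans (supported_gt0 qs gim)); rewrite (bigD1 m) ?ap_gt0_g //=.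
by rewrite lerDl sumr_ge0 // => l _; exact: supported_ge0.
Qed.

Lemma Hstar_ge0 : 0 <= Hstar.
Proof. by rewrite mulr_ge0 ?ler0n // sumr_ge0 // => k _; exact: apN_ge0. Qed.

Definition joins (f : edge adj) i j :=
  ((val f).1 == i) && ((val f).2 == j) || ((val f).1 == j) && ((val f).2 == i).

Lemma joins_sym f i j : joins f i j = joins f j i.
Proof. by rewrite /joins orbC. Qed.

Lemma joins_uniq {e f i j} : joins e i j -> joins f i j -> e = f.
Proof.
case: e f => [[e1 e2] He] [[f1 f2] Hf]; rewrite /joins /=.
have /andP [_ /= Re] := He; have /andP [_ /= Rf] := Hf.
move=> /orP [] /andP [/eqP E1 /eqP E2] /orP [] /andP [/eqP F1 /eqP F2];
  subst; try exact: val_inj.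
all: by move: (ltn_trans Re Rf); rewrite ltnn.
Qed.

Lemma joins_edge f e : joins f (val e).1 (val e).2 = (f == e).
Proof.
apply/idP/eqP => [jf|->]; last by rewrite /joins !eqxx.
by apply: joins_uniq jf _; rewrite /joins !eqxx.
Qed.

Lemma joins_exists {i j} : adj i j -> exists e, joins e i j.
Proof.
move=> aij; have ij : i != j by apply: contraTneq aij => ->; rewrite adj_irr.
have rij : enum_rank i != enum_rank j by apply: contra ij => /eqP /enum_rank_inj ->.
case: (ltngtP (enum_rank i) (enum_rank j)) => H.
- have E : is_edge adj (i, j) by rewrite /is_edge /= aij H.
  by exists (exist _ (i, j) E); rewrite /joins /= !eqxx.
- have E : is_edge adj (j, i) by rewrite /is_edge /= adj_sym aij H.
  by exists (exist _ (j, i) E); rewrite /joins /= !eqxx orbT.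
- by move: rij; rewrite (ord_inj H) eqxx.
Qed.

Lemma edge_neq (f : edge adj) : (val f).1 != (val f).2.
Proof.
by case: f => [[f1 f2]] /andP [+ _] /=; apply: contraTneq => ->; rewrite adj_irr.
Qed.

Lemma arrOf_joins (v : edge adj -> R) {e i j} : joins e i j -> arrOf v i j = v e.
Proof.
move=> je; rewrite /arrOf (big_pred1 e) // => f /=.
by apply/idP/eqP => [jf|->//]; exact: joins_uniq jf je.
Qed.

Lemma arrOf_eq0 (v : edge adj -> R) i j :
  (forall e, ~~ joins e i j) -> arrOf v i j = 0.
Proof. by move=> H; rewrite /arrOf big_pred0 // => f; apply/negbTE/H. Qed.

Definition perturb (q : V -> V -> R) (f : edge adj) (t : R) i j :=
  if joins f i j then t else q i j.

Definition incid (m : V) (f : edge adj) : R :=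
  if (m == (val f).1) || (m == (val f).2) then 1 else 0.

Definition edge_nucleus (e : edge adj) := nucleus (val e).1 (val e).2.

Section Jacobian.
Context {q : V -> V -> R} (q_Delta : inDelta adj a p h1 q) (q_g : graph_is q g).

Let q_supp : supported q := inDelta_supported q_Delta q_g.

Lemma inDelta_sym i j : q i j = q j i.
Proof. by case: q_Delta. Qed.

Lemma inDelta_ge0 i j : 0 <= q i j.
Proof. by case: q_Delta. Qed.

Lemma arrOf_upd f t : arrOf (upd (edgevec q) f t) = perturb q f t.
Proof.
apply/funext => i; apply/funext => j; rewrite /perturb.
have [[e je]|no_e] := pselect (exists e, joins e i j).
  rewrite (arrOf_joins _ je) /upd; case: eqP => [<-|/eqP fe]; first by rewrite je.
  have -> : joins f i j = false by apply: contraNF fe => /(joins_uniq je) ->.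
  by rewrite /edgevec; case/orP: je => /andP [/eqP -> /eqP ->] //; exact: inDelta_sym.
have no_e' e : ~~ joins e i j by apply/negP => je; apply: no_e; exists e.
rewrite arrOf_eq0 // (negbTE (no_e' f)); case aij: (adj i j).
  by case: (joins_exists aij) => e je; move: (no_e' e); rewrite je.
by case: q_Delta => _ _ -> //; rewrite aij.
Qed.

Lemma perturb_edgevec f : perturb q f (edgevec q f) = q.
Proof.
apply/funext => i; apply/funext => j; rewrite /perturb; case: ifP => // jf.
by rewrite /edgevec; case/orP: jf => /andP [/eqP -> /eqP ->] //; exact: inDelta_sym.
Qed.

Lemma Fsmooth_upd f t e :
  Fsmooth a p (upd (edgevec q) f t) e =
  (if f == e then t else edgevec q e) *
  (yf a p (perturb q f t) (val e).1 (val e).2 - Hap (perturb q f t)).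
Proof. by rewrite /Fsmooth /Hsmooth arrOf_upd /perturb joins_edge. Qed.

Lemma vsum_perturb f t k :
  vsum (perturb q f t) k = vsum q k + incid k f * (t - edgevec q f).
Proof.
have -> : vsum (perturb q f t) k =
    \sum_j (q k j + (if joins f k j then t - q k j else 0)).
  by apply: eq_bigr => j _; rewrite /perturb; case: ifP; rewrite ?addr0 // addrC subrK.
rewrite big_split /=; congr (_ + _); rewrite /incid -big_mkcond /=.
have nf := edge_neq f; case: eqP => [->|k1] /=.
  rewrite mul1r (big_pred1 (val f).2) // => j.
  by rewrite /joins eqxx /= [_.2 == _.1]eq_sym (negbTE nf) andbF orbF eq_sym.
case: eqP => [->|k2] /=.
  rewrite mul1r (big_pred1 (val f).1) ?(inDelta_sym (val f).2) // => j.
  by rewrite /joins eqxx andbT /= (negbTE nf) /= eq_sym.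
rewrite mul0r big_pred0 // => j; rewrite /joins.
by apply/negP => /orP [] /andP [/eqP E1 /eqP E2]; [case: k1 | case: k2].
Qed.

Lemma edgevec_gt0_g {e : edge adj} : 0 < edgevec q e -> g (val e).1 (val e).2.
Proof. by rewrite /edgevec q_g. Qed.

Lemma edgevec_eq0 {e : edge adj} : ~~ (0 < edgevec q e) -> edgevec q e = 0.
Proof. by rewrite lt0r negb_and negbK inDelta_ge0 orbF => /eqP. Qed.

Lemma supported_perturb {f : edge adj} {t} : 0 < edgevec q f -> 0 < t ->
  supported (perturb q f t).
Proof.
move=> qf t_gt0; split => i j; rewrite /perturb.
- by rewrite joins_sym inDelta_sym.
- by case: ifP => _; [exact: ltW | exact: inDelta_ge0].
- case: ifP => jf; last exact: q_g.
  rewrite t_gt0; apply/esym; have := edgevec_gt0_g qf.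
  by case/orP: jf => /andP [/eqP <- /eqP <-] //; rewrite g_sym.
Qed.

Lemma vsum_gt0_ap {i j} : 0 < ap i j -> 0 < vsum q i.
Proof.
move=> apij; have aij := ap_gt0_adj apij.
case: g_P => _ _ _ /(_ i) [_ /(_ (ex_intro _ j (conj aij apij))) [m gim]].
exact: (vsum_gt0 q_supp gim).
Qed.

Lemma jac_off_support (e f : edge adj) : edgevec q e = 0 -> f != e -> jac a p q e f = 0.
Proof.
move=> qe fe; rewrite /jac.
under eq_fun do rewrite Fsmooth_upd (negbTE fe) qe mul0r.
exact: derive1_cst.
Qed.

Lemma jac_off_support_diag (e : edge adj) : edgevec q e = 0 -> jac a p q e e = - Hstar.
Proof.
move=> qe; rewrite /jac -(Hap_supported q_supp); under eq_fun do rewrite Fsmooth_upd eqxx.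
have q0 : perturb q e 0 = q by rewrite -qe perturb_edgevec.
have X_cvg i j : perturb q e t i j @[t --> (0:R)] --> perturb q e 0 i j.
  by rewrite /perturb; case: ifP => _; [exact: cvg_id | exact: cvg_cst].
have nz i j : 0 < ap i j -> vsum (perturb q e 0) i * vsum (perturb q e 0) j != 0.
  move=> apij; rewrite q0 mulf_neq0 // gt_eqF //; first exact: vsum_gt0_ap apij.
  by apply: (vsum_gt0_ap (j := i)); rewrite ap_sym.
rewrite qe (@derive1_factor _ _
  (fun t => yf a p (perturb q e t) (val e).1 (val e).2 - Hap (perturb q e t))).
- rewrite /= q0 /yf; case: ifP => _; last by rewrite sub0r.
  by rewrite -/(edgevec q e) qe mulr0 mul0r sub0r.
- apply: cvgB.
    rewrite /yf; case: ifP => apij; last exact: cvg_cst.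
    apply: (ratio_vsum_cvg X_cvg) (nz _ _ apij) _.
    by apply: cvgM; [exact: cvg_cst | exact: X_cvg].
  apply: cvg_big => //; first exact: add_continuous.
  move=> i _; apply: cvg_big => //; first exact: add_continuous.
  move=> j apij; apply: (ratio_vsum_cvg X_cvg) (nz _ _ apij) _.
  by apply: cvgM; [exact: cvg_cst | rewrite expr2; apply: cvgM; exact: X_cvg].
- by near=> h => _; rewrite addr0 mul0r subr0.
Unshelve. all: by end_near.
Qed.

Lemma Fsmooth_upd_support (e f : edge adj) t : 0 < edgevec q e -> 0 < edgevec q f -> 0 < t ->
  Fsmooth a p (upd (edgevec q) f t) e =
  (if f == e then t else edgevec q e) *
  (apN (edge_nucleus e) /
     (vsum q (edge_nucleus e) + incid (edge_nucleus e) f * (t - edgevec q f))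
   - Hstar).
Proof.
move=> qe qf t_gt0; have qs := supported_perturb qf t_gt0.
by rewrite Fsmooth_upd (yf_supported qs (edgevec_gt0_g qe)) (Hap_supported qs) vsum_perturb.
Qed.

Lemma edge_nucleus_in {e : edge adj} : 0 < edgevec q e -> edge_nucleus e \in N.
Proof. by move/edgevec_gt0_g/nucleus_in. Qed.

Hypothesis q_Gamma : inGamma adj a p h1 q.

Lemma edge_nucleus_mass {e : edge adj} : 0 < edgevec q e ->
  apN (edge_nucleus e) / vsum q (edge_nucleus e) = Hstar.
Proof.
move=> qe; case: q_Gamma => _ /(_ (val e).1 (val e).2).
rewrite /Ff gt_eqF // => /eqP; rewrite mulf_eq0 gt_eqF //= subr_eq0 => /eqP.
by rewrite (yf_supported q_supp (edgevec_gt0_g qe)) (Hf_supported q_supp).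
Qed.

Lemma jac_support (e f : edge adj) : 0 < edgevec q e -> 0 < edgevec q f ->
  jac a p q e f = - (edgevec q e * (apN (edge_nucleus e) / vsum q (edge_nucleus e) ^+ 2)
                     * incid (edge_nucleus e) f).
Proof.
move=> qe qf; have mass := edge_nucleus_mass qe.
set k := edge_nucleus e in mass *; set s := vsum q k in mass *; set tau := incid k f.
have s_gt0 : 0 < s by exact: (vsum_nucleus_gt0 q_supp (edgevec_gt0_g qe)).
have tau01 : 0 <= tau <= 1 by rewrite /tau /incid; case: ifP; rewrite ?lexx ?ler01.
pose be : R := if f == e then 1 else 0.
rewrite /jac (@derive1_factor _ _ (fun h => be * (apN k / (s + tau * h) - Hstar)
   - edgevec q e * apN k * tau / s / (s + tau * h))).
- by rewrite /= mulr0 addr0 -mass; field; rewrite gt_eqF.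
- have inv := cvg_inv_affine s tau (lt0r_neq0 s_gt0).
  rewrite /= mulr0 addr0; apply: cvgB; apply: cvgM; try exact: cvg_cst; try exact: inv.
  by apply: cvgB; [apply: cvgM; [exact: cvg_cst | exact: inv] | exact: cvg_cst].
have n1 : \forall h \near (0:R), - edgevec q f < h by apply: lt_nbhsr; rewrite oppr_lt0.
have n2 : \forall h \near (0:R), - s < h by apply: lt_nbhsr; rewrite oppr_lt0.
near=> h => h_neq0.
have hf : - edgevec q f < h by near: h.
have hs : - s < h by near: h.
have ht : 0 < h + edgevec q f by lra.
rewrite !Fsmooth_upd_support // addrK subrr mulr0 addr0 -/k -/s -/tau -mass.
have st : s + tau * h != 0 by case/andP: tau01 => t0 t1; apply: lt0r_neq0; nra.
by rewrite /be; case: eqP => [->|_]; field; rewrite st gt_eqF.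
Unshelve. all: by end_near.
Qed.

Section Eigenvector.
Variables (z : R[i]) (v : edge adj -> R[i]).
Hypotheses (Re_z : 0 < complex.Re z)
  (v_eig : forall e, z * v e = \sum_f v f * (jac a p q e f)%:C%C).

Lemma eigvec_off_support (e : edge adj) : edgevec q e = 0 -> v e = 0.
Proof.
move=> qe; apply: (mul_eq_opp_nonneg_eq0 Re_z Hstar_ge0).
rewrite v_eig (bigD1 e) //= big1 ?addr0 => [|f fe].
  by rewrite jac_off_support_diag // rmorphN mulrN mulrC.
by rewrite jac_off_support // rmorph0 mulr0.
Qed.

Let incid_sum m := \sum_(f | 0 < edgevec q f) v f * (incid m f)%:C%C.

Lemma eigvec_support {e : edge adj} : 0 < edgevec q e ->
  z * v e = - ((edgevec q e * (apN (edge_nucleus e) / vsum q (edge_nucleus e) ^+ 2))%:C%C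
               * incid_sum (edge_nucleus e)).
Proof.
move=> qe; rewrite v_eig (bigID (fun f => 0 < edgevec q f)) /=.
rewrite [X in _ + X]big1 ?addr0 => [|f /edgevec_eq0 qf]; last first.
  by rewrite eigvec_off_support ?mul0r.
rewrite /incid_sum mulr_sumr -sumrN; apply: eq_bigr => f qf.
by rewrite jac_support // !rmorphN !rmorphM /=; ring.
Qed.

(* Summing the equations of the edges at a nucleus gives (z + c) S = 0, c >= 0. *)
Lemma incid_sum_nucleus m : m \in N -> incid_sum m = 0.
Proof.
move=> mN; apply: (mul_eq_opp_nonneg_eq0 Re_z (r := apN m / vsum q m ^+ 2 *
  \sum_(f | 0 < edgevec q f) edgevec q f * incid m f)).
  apply: mulr_ge0; first by rewrite divr_ge0 ?apN_ge0 ?sqr_ge0.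
  by apply: sumr_ge0 => f qf; rewrite mulr_ge0 ?(ltW qf) // /incid; case: ifP.
rewrite {1}/incid_sum mulr_sumr; transitivity (\sum_(f | 0 < edgevec q f)
  - ((apN m / vsum q m ^+ 2 * (edgevec q f * incid m f))%:C%C * incid_sum m)).
  apply: eq_bigr => f qf; rewrite [z * _]mulrA eigvec_support // /incid.
  case: ifP => mf; last by rewrite !rmorphM !rmorph0 /=; ring.
  rewrite /edge_nucleus (nucleus_endpoint (edgevec_gt0_g qf) mN mf).
  by rewrite !rmorphM !rmorph1 /=; ring.
by rewrite sumrN -mulr_suml -rmorph_sum -mulr_sumr.
Qed.

Lemma eigvec_eq0 (e : edge adj) : v e = 0.
Proof.
have [qe|/edgevec_eq0] := boolP (0 < edgevec q e); last exact: eigvec_off_support.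
have := eigvec_support qe; rewrite incid_sum_nucleus ?edge_nucleus_in // mulr0 oppr0.
move/eqP; rewrite mulf_eq0 => /orP [/eqP z0|/eqP //].
by move: Re_z; rewrite z0 ltxx.
Qed.

End Eigenvector.

Lemma jacmx_stable : eigen_nonpos_re (jacmx adj a p q).
Proof.
move=> z; rewrite -char_poly_trmx -eigenvalue_root_char => /eigenvalueP [w Hw w_neq0].
rewrite leNgt; apply/negP => Re_z; apply/negP: w_neq0; rewrite negbK.
apply/eqP/rowP => k; rewrite mxE -[k]enum_valK.
apply: (eigvec_eq0 z (fun e => w 0 (enum_rank e)) Re_z) => e.
have /rowP/(_ (enum_rank e)) := Hw; rewrite !mxE => <-.
rewrite [RHS](reindex _ (onW_bij _ (@enum_val_bij _))) /=.
by apply: eq_bigr => l _; rewrite !mxE enum_rankK enum_valK.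
Qed.

End Jacobian.

End Model.

Theorem proposition7 (R : realType) (V : finType) (adj : rel V)
  (a p : V -> V -> R) (h1 : R) :
  standing_hyps adj a p h1 ->
  forall (g : rel V) (N : {set V}),
    is_subgraph adj g -> P_sub adj a p g -> is_nuclei g N ->
  forall q : V -> V -> R,
    inDelta adj a p h1 q -> graph_is q g ->
    (inGamma adj a p h1 q <-> inGammaG adj a p h1 g N q) /\
    (inGamma adj a p h1 q -> stable_eq adj a p h1 q).
Proof.
move=> hyps g N g_sub g_P N_nuclei q q_Delta q_g; split; first split.
- exact: (inGammaG_of_inGamma hyps g_sub g_P N_nuclei q_Delta q_g).
- exact: (inGamma_of_inGammaG hyps g_sub g_P N_nuclei).
- move=> q_Gamma; split => //; first exact: (not_inBoundary g_P q_Delta q_g).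
  exact: (jacmx_stable hyps g_sub g_P N_nuclei q_Delta q_g q_Gamma).
Qed.
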